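(* Let $\pi_1,\pi_2:\mathbb P^3\dashrightarrow\mathbb P^2$ be linear projections with centers $c_1\neq c_2$ and fundamental matrix $F$. Under the bijection between lines $\ell_F\subset\mathbb P(\mathbb C^{3\times3})$ through $F$ and quadrics $Q\subset\mathbb P^3$ through $c_1,c_2$, the quadric $Q$ corresponding to $\ell_F$ is obtained as follows: for any $M\in\ell_F$ with $M\neq F$, $Q$ is cut out by the equation $\pi_2(p)^\top M\pi_1(p)=0$.
   Context: Work over $\mathbb C$. A linear projection $\pi:\mathbb P^3\dashrightarrow\mathbb P^2$ is $p\mapsto Ap$, $A\in\mathbb C^{3\times4}$ of rank three, with center spanning $\ker A$. The fundamental matrix of $(\pi_1,\pi_2)$ is the rank-two $F\in\mathbb P(\mathbb C^{3\times3})$ with $\pi_2(p)^\top F\pi_1(p)=0$ for all $p\in\mathbb P^3$. The claim includes that this $Q$ does not depend on the choice of $M\in\ell_F\setminus\{F\}$ and that $\ell_F\mapsto Q$ is a bijection onto the quadrics through $c_1,c_2$. *)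

From HB Require Import structures.
From mathcomp Require Import all_boot all_order all_algebra.
From mathcomp Require Export complex.
Set Implicit Arguments. Unset Strict Implicit. Unset Printing Implicit Defensive.
Import GRing.Theory.
Local Open Scope ring_scope.

(* The ground field: C := R[i] for a real closed field R (e.g. the reals),
   an algebraically closed field of characteristic 0. *)

Section Defs.
Variable K : fieldType.

(* pi(p) = A p for a camera matrix A : 'M_(3,4); a linear projection
   P^3 --> P^2 is such an A of rank 3. *)
Definition is_projection (A : 'M[K]_(3,4)) : Prop := \rank A = 3%N.

Definition is_center (A : 'M[K]_(3,4)) (c : 'cV[K]_4) : Prop :=
  c != 0 /\ A *m c = 0.

Definition bil3 (x : 'cV[K]_3) (M : 'M[K]_3) (y : 'cV[K]_3) : K :=
  (x^T *m M *m y) 0 0.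

Definition is_fundamental (A1 A2 : 'M[K]_(3,4)) (F : 'M[K]_3) : Prop :=
  \rank F = 2%N /\ forall p : 'cV[K]_4, bil3 (A2 *m p) F (A1 *m p) = 0.

Definition epi_form (A1 A2 : 'M[K]_(3,4)) (M : 'M[K]_3) (p : 'cV[K]_4) : K :=
  bil3 (A2 *m p) M (A1 *m p).

(* Quadrics in P^3 are represented by quadratic forms q : K^4 -> K given by a
   4x4 matrix,  q_B(p) = p^T B p ; a quadratic form defines a quadric iff it
   is not identically zero, and two such define the same quadric iff they are
   proportional by a nonzero scalar. *)
Definition qform (B : 'M[K]_4) (p : 'cV[K]_4) : K := (p^T *m B *m p) 0 0.

Definition nonzero_form (q : 'cV[K]_4 -> K) : Prop := exists p, q p != 0.

Definition same_quadric (q q' : 'cV[K]_4 -> K) : Prop :=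
  exists a : K, a != 0 /\ forall p, q p = a * q' p.

(* A line l_F in P(K^{3x3}) through F: a 2-dimensional subspace containing F.
   Its points other than F are the M in l_F not in the span of F. *)
Definition line_through (F : 'M[K]_3) (L : {vspace 'M[K]_3}) : Prop :=
  \dim L = 2%N /\ F \in L.

Definition point_of_line_not_F (F : 'M[K]_3) (L : {vspace 'M[K]_3})
  (M : 'M[K]_3) : Prop := M \in L /\ M \notin <[F]>%VS.

End Defs.

From HB Require Import structures.
From mathcomp Require Import all_boot all_order all_algebra.
From mathcomp Require Import complex ring.
From Stdlib Require Import Classical.
Set Implicit Arguments. Unset Strict Implicit. Unset Printing Implicit Defensive.
Import GRing.Theory.
Local Open Scope ring_scope.

(* The matrix M gives the quadratic form p |-> pi_2(p)^T M pi_1(p) = p^T (A2^T M A1) p.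
   As A1 and A2 are onto, M |-> A2^T M A1 is injective, and its image consists of the
   N with N c1 = 0 and c2^T N = 0; every quadratic form vanishing at c1 and c2 has such
   a representing matrix.  A form vanishing identically comes from an alternating N;
   since c1 and c2 lie in its radical and we are in dimension 4, such N form a line,
   spanned by A2^T F A1.  So M |-> (form of M) is linear with kernel <[F]> and image the
   forms vanishing at c1 and c2, and projectivizing it matches the lines through F with
   the quadrics through c1 and c2. *)

Section BilinearForm.
Variable K : fieldType.

Definition bform m n (x : 'cV[K]_m) (M : 'M[K]_(m, n)) (y : 'cV[K]_n) : K :=
  (x^T *m M *m y) 0 0.

Lemma bformDl m n x1 x2 (M : 'M[K]_(m, n)) y :
  bform (x1 + x2) M y = bform x1 M y + bform x2 M y.
Proof. by rewrite /bform linearD /= !mulmxDl mxE. Qed.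

Lemma bformZl m n a x (M : 'M[K]_(m, n)) y : bform (a *: x) M y = a * bform x M y.
Proof. by rewrite /bform linearZ /= -!scalemxAl mxE. Qed.

Lemma bform0l m n (M : 'M[K]_(m, n)) y : bform 0 M y = 0.
Proof. by rewrite /bform trmx0 !mul0mx mxE. Qed.

Lemma bformDr m n x (M : 'M[K]_(m, n)) y1 y2 :
  bform x M (y1 + y2) = bform x M y1 + bform x M y2.
Proof. by rewrite /bform mulmxDr mxE. Qed.

Lemma bformZr m n a x (M : 'M[K]_(m, n)) y : bform x M (a *: y) = a * bform x M y.
Proof. by rewrite /bform -scalemxAr mxE. Qed.

Lemma bformDm m n x (M1 M2 : 'M[K]_(m, n)) y :
  bform x (M1 + M2) y = bform x M1 y + bform x M2 y.
Proof. by rewrite /bform mulmxDr mulmxDl mxE. Qed.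

Lemma bformZm m n a x (M : 'M[K]_(m, n)) y : bform x (a *: M) y = a * bform x M y.
Proof. by rewrite /bform -scalemxAr -scalemxAl mxE. Qed.

Lemma bformBl m n x1 x2 (M : 'M[K]_(m, n)) y :
  bform (x1 - x2) M y = bform x1 M y - bform x2 M y.
Proof. by rewrite bformDl -scaleN1r bformZl mulN1r. Qed.

Lemma bformBr m n x (M : 'M[K]_(m, n)) y1 y2 :
  bform x M (y1 - y2) = bform x M y1 - bform x M y2.
Proof. by rewrite bformDr -scaleN1r bformZr mulN1r. Qed.

Lemma bformBm m n x (M1 M2 : 'M[K]_(m, n)) y :
  bform x (M1 - M2) y = bform x M1 y - bform x M2 y.
Proof. by rewrite bformDm -scaleN1r bformZm mulN1r. Qed.

Lemma bform_mulmx m n p q (A : 'M[K]_(p, m)) (B : 'M[K]_(q, n)) x M y :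
  bform (A *m x) M (B *m y) = bform x (A^T *m M *m B) y.
Proof. by rewrite /bform trmx_mul !mulmxA. Qed.

Lemma bform_trmx n x (M : 'M[K]_n) y : bform x M^T y = bform y M x.
Proof.
have tr11 (A : 'M[K]_1) : A 0 0 = A^T 0 0 by rewrite mxE.
by rewrite /bform [RHS]tr11 !trmx_mul !trmxK mulmxA.
Qed.

Lemma bform_kerr m n x (M : 'M[K]_(m, n)) y : M *m y = 0 -> bform x M y = 0.
Proof. by rewrite /bform -mulmxA => ->; rewrite mulmx0 mxE. Qed.

Lemma bform_kerl m n x (M : 'M[K]_(m, n)) y : x^T *m M = 0 -> bform x M y = 0.
Proof. by rewrite /bform => ->; rewrite mul0mx mxE. Qed.

Lemma bform_eq0 m n (M : 'M[K]_(m, n)) : (forall x y, bform x M y = 0) -> M = 0.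
Proof.
move=> M0; apply/matrixP => i j; rewrite mxE -(M0 (delta_mx i 0) (delta_mx j 0)).
by rewrite /bform trmx_delta -rowE -colE !mxE.
Qed.

Lemma bform_neq0 m n (M : 'M[K]_(m, n)) : M != 0 -> exists x y, bform x M y = 1.
Proof.
case/matrix0Pn => i [j Mij]; exists ((M i j)^-1 *: delta_mx i 0), (delta_mx j 0).
by rewrite bformZl /bform trmx_delta -rowE -colE !mxE mulVf.
Qed.

Lemma alt_bform_skew n (M : 'M[K]_n) : (forall p, bform p M p = 0) ->
  forall x y, bform x M y = - bform y M x.
Proof.
move=> Malt x y; apply/eqP; rewrite -addr_eq0; apply/eqP.
by have := Malt (x + y); rewrite !(bformDl, bformDr) !Malt add0r addr0.
Qed.

End BilinearForm.

Section LinearAlgebra.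
Variable K : fieldType.

Lemma corank1_ker m n p (A : 'M[K]_(m, n.+1)) (c : 'cV_n.+1) (X : 'M_(n.+1, p)) :
  \rank A = n -> c != 0 -> A *m c = 0 -> A *m X = 0 -> exists D : 'rV_p, X = c *m D.
Proof.
move=> rA c0 Ac AX.
have kerA q (Y : 'M_(n.+1, q)) : A *m Y = 0 -> (Y^T <= kermx A^T)%MS.
  by move=> AY; rewrite sub_kermx -trmx_mul AY trmx0.
have ker_c : (kermx A^T <= c^T)%MS.
  rewrite -(mxrank_leqif_sup (kerA _ _ Ac)).2 mxrank_ker mxrank_tr rA subSnn.
  by rewrite rank_rV trmx_eq0 c0.
have /submxP [D XD] := submx_trans (kerA _ _ AX) ker_c.
by exists D^T; rewrite -[X]trmxK XD trmx_mul trmxK.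
Qed.

Lemma rinv_corank1 n (A : 'M[K]_(n, n.+1)) c : \rank A = n -> c != 0 -> A *m c = 0 ->
  exists2 B : 'M_(n.+1, n), A *m B = 1%:M & exists D : 'rV_n.+1, B *m A = 1%:M + c *m D.
Proof.
move=> rA c0 Ac; have [B AB] : exists B, A *m B = 1%:M.
  by apply/row_freeP; rewrite /row_free rA.
exists B => //; have [|D BAD] := corank1_ker (X := B *m A - 1%:M) rA c0 Ac.
  by rewrite mulmxBr mulmxA AB mul1mx mulmx1 subrr.
by exists D; rewrite -BAD addrC subrK.
Qed.

Lemma exists_dual_row m n (A : 'M[K]_(m, n)) (c c' : 'cV_n) :
  A *m c != 0 -> A *m c' = 0 -> exists w : 'rV_n, w *m c = 1 /\ w *m c' = 0.
Proof.
case/cV0Pn => i Aci Ac'; exists (((A *m c) i 0)^-1 *: (delta_mx 0 i *m A)).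
rewrite -!scalemxAl -!mulmxA Ac' mulmx0 scaler0 -rowE; split=> //.
apply/rowP => j; move: Aci; rewrite ord1 !mxE eqxx => Aci; exact: mulVf.
Qed.

Lemma rank1_mulmx n (c : 'cV[K]_n) (w : 'rV_n) y : c *m w *m y = (w *m y) 0 0 *: c.
Proof. by rewrite -mulmxA {1}[w *m y]mx11_scalar mul_mx_scalar. Qed.

Lemma qform_centered_repr n (B : 'M[K]_n) (c1 c2 : 'cV_n) (w1 w2 : 'rV_n) :
  w1 *m c1 = 1 -> w1 *m c2 = 0 -> w2 *m c2 = 1 -> w2 *m c1 = 0 ->
  bform c1 B c1 = 0 -> bform c2 B c2 = 0 ->
  exists N, [/\ N *m c1 = 0, c2^T *m N = 0 & forall p, bform p N p = bform p B p].
Proof.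
move=> w1c1 w1c2 w2c2 w2c1 Bc1 Bc2.
pose P1 := 1%:M - c1 *m w1; pose P2 := 1%:M - c2 *m w2; pose Pi := P1 - c2 *m w2.
have P1c1 : P1 *m c1 = 0 by rewrite mulmxBl mul1mx -mulmxA w1c1 mulmx1 subrr.
have P2c2 : P2 *m c2 = 0 by rewrite mulmxBl mul1mx -mulmxA w2c2 mulmx1 subrr.
have Pic1 : Pi *m c1 = 0 by rewrite mulmxBl P1c1 -mulmxA w2c1 mulmx0 subr0.
have Pic2 : Pi *m c2 = 0.
  by rewrite !mulmxBl mul1mx -!mulmxA w1c2 w2c2 mulmx0 mulmx1 subr0 subrr.
(* Write p = Pi p + a1 c1 + a2 c2 with ai := wi p.  Then B + B^T evaluated at
   (P2 p, P1 p) = (Pi p + a1 c1, Pi p + a2 c2) yields every term of p^T B p once,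
   except (Pi p)^T B (Pi p), which it yields twice. *)
exists (P2^T *m (B + B^T) *m P1 - Pi^T *m B *m Pi); split.
- by rewrite mulmxBl -!mulmxA P1c1 Pic1 !mulmx0 subr0.
- by rewrite mulmxBr !mulmxA -!trmx_mul P2c2 Pic2 !trmx0 !mul0mx subr0.
move=> p; rewrite bformBm -!bform_mulmx.
rewrite !mulmxBl !mul1mx !rank1_mulmx.
rewrite !(bformBl, bformBr, bformZl, bformZr, bformDm, bform_trmx) Bc1 Bc2.
ring.
Qed.

End LinearAlgebra.

Section LinesThroughKernel.
Variables (K : fieldType) (V : vectType K) (T : Type) (phi : V -> T -> K) (F : V).
Hypothesis phi_linear : forall a M N p, phi (a *: M + N) p = a * phi M p + phi N p.
Hypothesis F_neq0 : F != 0.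
Hypothesis phi_eq0 : forall M, (forall p, phi M p = 0) <-> M \in <[F]>%VS.

Lemma dim_line_through M : M \notin <[F]>%VS -> \dim (<[F]> + <[M]>) = 2.
Proof.
move=> MF; apply/eqP; rewrite eqn_leq; apply/andP; split.
  apply: leq_trans (dimv_add_leqif _ _) _.
  by rewrite !dim_vline; case: (F != 0); case: (M != 0).
have dimF : \dim <[F]> = 1%N by rewrite dim_vline F_neq0.
have := ltn_leqif (dimv_leqif_sup (addvSl <[F]> <[M]>)); rewrite dimF => ->.
by apply: contra MF => /subvP; apply; apply: (subvP (addvSr _ _)); apply: memv_line.
Qed.

Lemma line_through_span L M : \dim L = 2 -> F \in L -> M \in L -> M \notin <[F]>%VS ->
  L = (<[F]> + <[M]>)%VS.
Proof.
move=> dimL FL ML MF; apply/eqP; rewrite eq_sym eqEdim dim_line_through // dimL leqnn.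
by rewrite subv_add -!memvE FL ML.
Qed.

Lemma form_neq0_off_kernel M : M \notin <[F]>%VS -> exists p, phi M p != 0.
Proof.
move=> MF; have [p Mp] : exists p, ~ phi M p = 0.
  by apply: not_all_ex_not => M0; case/negP: MF; apply/phi_eq0.
by exists p; apply/eqP.
Qed.

Lemma form_proportional_on_line M M' :
  M' \in (<[F]> + <[M]>)%VS -> M' \notin <[F]>%VS ->
  exists a, a != 0 /\ forall p, phi M' p = a * phi M p.
Proof.
case/memv_addP => _ /vlineP [b ->] [_ /vlineP [a ->] ->] MF.
have bF : b *: F \in <[F]>%VS by rewrite memvZ // memv_line.
exists a; split.
  by apply: contraNneq MF => a0; rewrite a0 scale0r addr0.
by move=> p; rewrite addrC phi_linear (proj2 (phi_eq0 _) bF) addr0.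
Qed.

Lemma line_through_unique L M0 : \dim L = 2 -> F \in L -> M0 \notin <[F]>%VS ->
  (forall M, M \in L -> M \notin <[F]>%VS ->
     exists a, a != 0 /\ forall p, phi M p = a * phi M0 p) ->
  L = (<[F]> + <[M0]>)%VS.
Proof.
move=> dimL FL M0F HL.
have /subvPn [M ML MF] : ~~ (L <= <[F]>)%VS.
  by apply/negP => /dimvS; rewrite dimL dim_vline F_neq0.
have [a [a0 Ma]] := HL M ML MF.
have : M - a *: M0 \in <[F]>%VS.
  by apply/phi_eq0 => p; rewrite addrC -scaleNr phi_linear Ma mulNr addNr.
case/vlineP => k Mk; apply: line_through_span => //.
have -> : M0 = a^-1 *: (M - k *: F).
  by rewrite -Mk opprB addrC subrK scalerA mulVf // scale1r.
by rewrite memvZ // memvB // memvZ.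
Qed.

End LinesThroughKernel.

Section AlternatingForms.
Variables (K : fieldType) (c1 c2 : 'cV[K]_4).
Hypothesis c12_free : forall a b, a *: c1 + b *: c2 = 0 -> a = 0 /\ b = 0.

Definition alt_centered (N : 'M[K]_4) :=
  [/\ forall p, bform p N p = 0, N *m c1 = 0 & c2^T *m N = 0].

Lemma alt_centered_radical N : alt_centered N ->
  [/\ forall x, bform c1 N x = 0, forall x, bform x N c1 = 0,
       forall x, bform c2 N x = 0 & forall x, bform x N c2 = 0].
Proof.
move=> [Nalt Nc1 Nc2]; have skew := alt_bform_skew Nalt.
have xc1 x : bform x N c1 = 0 by apply: bform_kerr.
have c2x x : bform c2 N x = 0 by apply: bform_kerl.
by split=> // x; rewrite skew ?xc1 ?c2x oppr0.
Qed.

Lemma alt_centered_span N u v : alt_centered N -> bform u N v = 1 ->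
  forall z, exists a b c d, z = a *: c1 + b *: c2 + c *: u + d *: v.
Proof.
move=> Nc Nuv z; have [Nalt _ _] := Nc.
have Nvu : bform v N u = -1 by rewrite (alt_bform_skew Nalt) Nuv.
pose X := [tuple c1; c2; u; v].
have freeX : free X.
  apply/freeP => k; rewrite !big_ord_recl big_ord0 addr0 /= => Xk.
  have := congr1 (fun x => bform x N u) Xk; have := congr1 (fun x => bform x N v) Xk.
  have [c1N _ c2N _] := alt_centered_radical Nc.
  rewrite /= !(bformDl, bformZl) !c1N !c2N !Nalt Nuv Nvu !bform0l.
  rewrite !mulr0 !add0r mulr1 addr0 mulrN1 => k2 /eqP; rewrite oppr_eq0 => /eqP k3.
  move: Xk; rewrite k2 k3 !scale0r !addr0 => /c12_free [k0 k1].
  by case=> -[|[|[|[|//]]]] i; [rewrite -k0|rewrite -k1|rewrite -k2|rewrite -k3];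
    congr k; apply: val_inj.
have spanX : <<X>>%VS = fullv.
  by apply/eqP; rewrite eqEdim subvf dimvf dim_matrix; move/eqP: freeX => ->.
have zX : z \in <<X>>%VS by rewrite spanX memvf.
rewrite (coord_span zX) !big_ord_recl big_ord0 addr0 /=.
by do 4 eexists; rewrite !addrA.
Qed.

Lemma alt_centered_colinear (N0 N : 'M[K]_4) :
  N0 != 0 -> alt_centered N0 -> alt_centered N -> exists k, N = k *: N0.
Proof.
move=> N00 N0c [Nalt Nc1 Nc2]; have [u [v N0uv]] := bform_neq0 N00.
exists (bform u N v); apply/eqP; rewrite -subr_eq0; apply/eqP.
set H := N - _ *: N0; have [N0alt N0c1 N0c2] := N0c.
have Hc : alt_centered H.
  split=> [p||]; rewrite /H.
  - by rewrite bformBm bformZm Nalt N0alt mulr0 subr0.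
  - by rewrite mulmxBl -scalemxAl Nc1 N0c1 scaler0 subr0.
  by rewrite mulmxBr -scalemxAr Nc2 N0c2 scaler0 subr0.
have Huv : bform u H v = 0 by rewrite bformBm bformZm N0uv mulr1 subrr.
have [Halt _ _] := Hc.
have Hvu : bform v H u = 0 by rewrite (alt_bform_skew Halt) Huv oppr0.
apply: bform_eq0 => x y.
have [a [b [c [d ->]]]] := alt_centered_span N0c N0uv x.
have [a' [b' [c' [d' ->]]]] := alt_centered_span N0c N0uv y.
have [c1H Hc1 c2H Hc2] := alt_centered_radical Hc.
rewrite !(bformDl, bformZl, bformDr, bformZr) !c1H !Hc1 !c2H !Hc2 Huv Hvu !Halt.
by rewrite !(mulr0, addr0).
Qed.

End AlternatingForms.

Section Cameras.
Variables (K : fieldType) (n : nat) (A1 A2 : 'M[K]_(n, n.+1)) (c1 c2 : 'cV[K]_n.+1).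
Hypotheses (rA1 : \rank A1 = n) (rA2 : \rank A2 = n).
Hypotheses (c1_neq0 : c1 != 0) (c2_neq0 : c2 != 0).
Hypotheses (A1c1 : A1 *m c1 = 0) (A2c2 : A2 *m c2 = 0).
Hypothesis c1_notin_c2 : forall a, c1 != a *: c2.

Definition epi_mx (G : 'M[K]_n) : 'M[K]_n.+1 := A2^T *m G *m A1.

Lemma epi_mxZ a G : epi_mx (a *: G) = a *: epi_mx G.
Proof. by rewrite /epi_mx scalemxAl scalemxAr. Qed.

Lemma epi_mxD G H : epi_mx (G + H) = epi_mx G + epi_mx H.
Proof. by rewrite /epi_mx mulmxDr mulmxDl. Qed.

Lemma epi_mx_inj : injective epi_mx.
Proof.
have [B1 AB1 _] := rinv_corank1 rA1 c1_neq0 A1c1.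
have [B2 AB2 _] := rinv_corank1 rA2 c2_neq0 A2c2.
have epiK G : B2^T *m epi_mx G *m B1 = G.
  by rewrite /epi_mx !mulmxA -trmx_mul AB2 trmx1 mul1mx -mulmxA AB1 mulmx1.
by move=> G G' /(congr1 (fun N => B2^T *m N *m B1)); rewrite !epiK.
Qed.

Lemma epi_mx_centered G : epi_mx G *m c1 = 0 /\ c2^T *m epi_mx G = 0.
Proof. by rewrite /epi_mx -mulmxA A1c1 mulmx0 !mulmxA -trmx_mul A2c2 trmx0 !mul0mx. Qed.

Lemma epi_mx_image N : (exists G, epi_mx G = N) <-> N *m c1 = 0 /\ c2^T *m N = 0.
Proof.
split=> [[G <-]|[Nc1 Nc2]]; first exact: epi_mx_centered.
have [B1 _ [D1 BA1]] := rinv_corank1 rA1 c1_neq0 A1c1.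
have [B2 _ [D2 BA2]] := rinv_corank1 rA2 c2_neq0 A2c2.
have NBA : N *m (B1 *m A1) = N by rewrite BA1 mulmxDr mulmx1 mulmxA Nc1 mul0mx addr0.
have ABN : A2^T *m B2^T *m N = N.
  rewrite -trmx_mul BA2 linearD /= trmx1 trmx_mul mulmxDl mul1mx.
  by rewrite -mulmxA Nc2 mulmx0 addr0.
by exists (B2^T *m N *m B1); rewrite /epi_mx !mulmxA ABN -mulmxA NBA.
Qed.

Lemma centers_free a b : a *: c1 + b *: c2 = 0 -> a = 0 /\ b = 0.
Proof.
move=> abc; have [a0|a_neq0] := eqVneq a 0.
  split=> //; move/eqP: abc; rewrite a0 scale0r add0r scaler_eq0 (negbTE c2_neq0) orbF.
  by move/eqP.
case/eqP: (c1_notin_c2 (- b / a)); apply: (scalerI a_neq0).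
rewrite scalerA mulrCA mulfV // mulr1 scaleNr.
by apply/eqP; rewrite -addr_eq0 abc.
Qed.

Lemma A1c2_neq0 : A1 *m c2 != 0.
Proof.
apply/eqP => A1c2; have [D c2D] := corank1_ker rA1 c1_neq0 A1c1 A1c2.
have := centers_free (a := D 0 0) (b := -1).
rewrite scaleN1r -mul_mx_scalar -mx11_scalar -c2D subrr => /(_ erefl) [_ /eqP].
by rewrite oppr_eq0 oner_eq0.
Qed.

Lemma A2c1_neq0 : A2 *m c1 != 0.
Proof.
apply/eqP => A2c1; have [D c1D] := corank1_ker rA2 c2_neq0 A2c2 A2c1.
by move: (c1_notin_c2 (D 0 0)); rewrite -mul_mx_scalar -mx11_scalar -c1D eqxx.
Qed.

Lemma epi_mx_qform_onto (B : 'M[K]_n.+1) :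
  bform c1 B c1 = 0 -> bform c2 B c2 = 0 ->
  exists G, forall p, bform p (epi_mx G) p = bform p B p.
Proof.
move=> Bc1 Bc2.
have [w1 [w1c1 w1c2]] := exists_dual_row A2c1_neq0 A2c2.
have [w2 [w2c2 w2c1]] := exists_dual_row A1c2_neq0 A1c1.
have [N [Nc1 Nc2 NB]] := qform_centered_repr w1c1 w1c2 w2c2 w2c1 Bc1 Bc2.
have [G GN] := (epi_mx_image N).2 (conj Nc1 Nc2).
by exists G => p; rewrite GN NB.
Qed.

End Cameras.

Section Fundamental.
Variables (K : fieldType) (A1 A2 : 'M[K]_(3, 4)) (c1 c2 : 'cV[K]_4) (F : 'M[K]_3).
Hypotheses (rA1 : \rank A1 = 3) (rA2 : \rank A2 = 3).
Hypotheses (c1_neq0 : c1 != 0) (c2_neq0 : c2 != 0).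
Hypotheses (A1c1 : A1 *m c1 = 0) (A2c2 : A2 *m c2 = 0).
Hypothesis c1_notin_c2 : forall a, c1 != a *: c2.
Hypotheses (rF : \rank F = 2) (F_epipolar : forall p, epi_form A1 A2 F p = 0).

Lemma epi_formE M p : epi_form A1 A2 M p = bform p (epi_mx A1 A2 M) p.
Proof. exact: bform_mulmx. Qed.

Lemma epi_form_linear a M N p :
  epi_form A1 A2 (a *: M + N) p = a * epi_form A1 A2 M p + epi_form A1 A2 N p.
Proof. by rewrite !epi_formE epi_mxD epi_mxZ bformDm bformZm. Qed.

Lemma epi_form_centers M : epi_form A1 A2 M c1 = 0 /\ epi_form A1 A2 M c2 = 0.
Proof. by rewrite /epi_form /bil3 A1c1 A2c2 trmx0 mulmx0 !mul0mx mxE. Qed.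

Lemma fundamental_neq0 : F != 0.
Proof. by apply/eqP => F0; move: rF; rewrite F0 mxrank0. Qed.

Let epi_inj := epi_mx_inj rA1 rA2 c1_neq0 c2_neq0 A1c1 A2c2.

Lemma epi_form_eq0 G : (forall p, epi_form A1 A2 G p = 0) <-> G \in <[F]>%VS.
Proof.
have centered H : (forall p, epi_form A1 A2 H p = 0) ->
    alt_centered c1 c2 (epi_mx A1 A2 H).
  move=> Halt; have [] := epi_mx_centered A1c1 A2c2 H.
  by split=> // p; rewrite -epi_formE.
have epiF_neq0 : epi_mx A1 A2 F != 0.
  apply: contra_neq fundamental_neq0 => epiF0.
  by apply: epi_inj; rewrite epiF0 /epi_mx mulmx0 mul0mx.
split=> [Galt|/vlineP [k ->] p].
  have [k Gk] := alt_centered_colinear (centers_free c2_neq0 c1_notin_c2) epiF_neq0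
    (centered _ F_epipolar) (centered _ Galt).
  by apply/vlineP; exists k; apply: epi_inj; rewrite epi_mxZ.
by rewrite epi_formE epi_mxZ bformZm -epi_formE F_epipolar mulr0.
Qed.

Lemma epi_form_onto (B : 'M[K]_4) : qform B c1 = 0 -> qform B c2 = 0 ->
  exists M, forall p, epi_form A1 A2 M p = qform B p.
Proof.
move=> Bc1 Bc2.
have [M MB] := epi_mx_qform_onto rA1 rA2 c1_neq0 c2_neq0 A1c1 A2c2 c1_notin_c2 Bc1 Bc2.
by exists M => p; rewrite epi_formE MB.
Qed.

End Fundamental.

Theorem mainTheorem11 (R : rcfType) (A1 A2 : 'M[R[i]]_(3,4))
  (c1 c2 : 'cV[R[i]]_4) (F : 'M[R[i]]_3) :
  is_projection A1 -> is_projection A2 ->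
  is_center A1 c1 -> is_center A2 c2 ->
  (forall a : R[i], c1 != a *: c2) ->
  is_fundamental A1 A2 F ->
  (* well-definedness: each line l_F through F gives, via any M in l_F \ {F},
     a quadric through c1 and c2, independent of the choice of M *)
  (forall L : {vspace 'M[R[i]]_3}, line_through F L ->
     (forall M, point_of_line_not_F F L M ->
        nonzero_form (epi_form A1 A2 M) /\
        epi_form A1 A2 M c1 = 0 /\ epi_form A1 A2 M c2 = 0) /\
     (forall M M', point_of_line_not_F F L M -> point_of_line_not_F F L M' ->
        same_quadric (epi_form A1 A2 M) (epi_form A1 A2 M'))) /\
  (* bijectivity: every quadric through c1, c2 arises from exactly one line *)
  (forall B : 'M[R[i]]_4,
     nonzero_form (qform B) -> qform B c1 = 0 -> qform B c2 = 0 ->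
     exists L : {vspace 'M[R[i]]_3},
       (line_through F L /\
        forall M, point_of_line_not_F F L M ->
          same_quadric (epi_form A1 A2 M) (qform B)) /\
       forall L' : {vspace 'M[R[i]]_3},
         line_through F L' ->
         (forall M, point_of_line_not_F F L' M ->
            same_quadric (epi_form A1 A2 M) (qform B)) ->
         L' = L).
Proof.
move=> rA1 rA2 [c1_neq0 A1c1] [c2_neq0 A2c2] c1_notin_c2 [rF F_epipolar].
have F_neq0 := fundamental_neq0 rF.
have phi_linear := @epi_form_linear _ A1 A2.
have phi_eq0 := epi_form_eq0 rA1 rA2 c1_neq0 c2_neq0 A1c1 A2c2 c1_notin_c2 rF F_epipolar.
have on_line := form_proportional_on_line phi_linear phi_eq0.
split=> [L [dimL FL]|B Bnz Bc1 Bc2].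
  split=> [M [ML MF]|M M' [ML MF] [ML' MF']].
    by split; [apply: form_neq0_off_kernel phi_eq0 _ MF | apply: epi_form_centers].
  by apply: on_line MF; rewrite -(line_through_span F_neq0 dimL FL ML' MF').
have [M0 M0B] := epi_form_onto rA1 rA2 c1_neq0 c2_neq0 A1c1 A2c2 c1_notin_c2 Bc1 Bc2.
have M0F : M0 \notin <[F]>%VS.
  by apply/negP => /phi_eq0 M00; case: Bnz => p; rewrite -M0B M00 eqxx.
have sameB M : same_quadric (epi_form A1 A2 M) (qform B) <->
    exists a, a != 0 /\ forall p, epi_form A1 A2 M p = a * epi_form A1 A2 M0 p.
  by split=> -[a [a0 Ma]]; exists a; split=> // p; rewrite Ma M0B.
exists (<[F]> + <[M0]>)%VS; split.
  split; last by move=> M [ML MF]; apply/sameB; apply: on_line ML MF.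
  by split; [apply: dim_line_through | exact: subvP (addvSl _ _) _ (memv_line F)].
move=> L' [dimL' FL'] HL'.
apply: (line_through_unique phi_linear F_neq0 phi_eq0) => // M ML' MF'.
exact/sameB/HL'.
Qed.
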